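(* Let $M$ be a rank-3 paving matroid on a linearly ordered finite ground set $E$, and let $M^0$ and $M^1$ be the rank-3 sparse paving matroids on $E$ whose sets of circuit-hyperplanes are $\mathcal{V}^0(M)$ and $\mathcal{V}^1(M)$ respectively. If $M$ has no minor isomorphic to $\mathcal{W}^3$ or $M(K_4)$, then neither $M^0$ nor $M^1$ has a minor isomorphic to $\mathcal{W}^3$ or $M(K_4)$.
   Context: A matroid is paving if every circuit has size $r(M)$ or $r(M)+1$; it is sparse paving if every nonspanning circuit is a hyperplane. For a hyperplane $H$ of $M$ (a rank-2 flat), let $\mathcal{V}(H)$ be the set of 3-subsets $V\subseteq H$ that are consecutive in $H$, i.e. there are no $v,v'\in V$ and $h\in H\setminus V$ with $v<h<v'$. Listing them in increasing order as $\mathcal{V}(H)=\{V_H^0,V_H^1,\dots,V_H^{|H|-3}\}$ (so consecutive ones share exactly two elements), set $\mathcal{V}^0(H)=\{V_H^i: i \text{ even}\}$, $\mathcal{V}^1(H)=\{V_H^i: i\text{ odd}\}$, and $\mathcal{V}^k(M)=\bigcup_{H}\mathcal{V}^k(H)$ over all hyperplanes $H$ of $M$, for $k\in\{0,1\}$. It is known (Pendavingh–Van der Pol) that each $\mathcal{V}^k(M)$ is the set of circuit-hyperplanes of a rank-3 sparse paving matroid on $E$. $\mathcal{W}^3$ is the rank-3 matroid on $\{a,b,c,d,e,f\}$ whose only dependent 3-sets are $\{a,b,c\},\{c,d,e\},\{e,f,a\}$; $M(K_4)$ is the rank-3 matroid on $\{a,b,c,d,e,f\}$ whose only dependent 3-sets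 are $\{a,b,c\},\{c,d,e\},\{e,f,a\},\{b,d,f\}$. *)

From mathcomp Require Import all_boot all_order.
Set Implicit Arguments. Unset Strict Implicit. Unset Printing Implicit Defensive.
Import Order.TTheory.

Section Matroids.
Variable T : finType.
Implicit Types (E X Y C D F V H : {set T}) (I : {set T} -> bool).

Definition is_matroid E I : Prop :=
  [/\ I set0,
      forall X, I X -> X \subset E,
      forall X Y, Y \subset X -> I X -> I Y &
      forall X Y, I X -> I Y -> #|X| < #|Y| ->
        exists2 y, y \in Y :\: X & I (y |: X)].

Definition rk I X : nat := \max_(Y : {set T} | (Y \subset X) && I Y) #|Y|.

Definition circuit E I C : bool :=
  [&& C \subset E, ~~ I C & [forall x in C, I (C :\ x)]].

Definition flat E I F : bool :=
  (F \subset E) && [forall x in E :\: F, rk I F < rk I (x |: F)].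

Definition hyperplane E I H : bool :=
  flat E I H && (rk I H == (rk I E).-1).

Definition paving E I : Prop :=
  forall C, circuit E I C -> rk I E <= #|C| <= (rk I E).+1.

Definition sparse_paving E I : Prop :=
  paving E I /\ forall C, circuit E I C -> rk I C < rk I E -> hyperplane E I C.

Definition circuit_hyperplane E I X : bool := circuit E I X && hyperplane E I X.

(* Minors: M / C \ D, for disjoint C, D contained in E.  Ground set E \ (C u D);
   X is independent in M/C\D iff X is in the ground set and r(X u C) = |X| + r(C). *)
Definition minor_indep E I C D X : bool :=
  (X \subset E :\: (C :|: D)) && (rk I (X :|: C) == #|X| + rk I C).

Definition has_minor_iso E I (J : {set 'I_6} -> bool) : Prop :=
  exists C D, [/\ C \subset E, D \subset E, [disjoint C & D] &
    exists g : 'I_6 -> T, [/\ injective g, g @: setT = E :\: (C :|: D) &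
       forall X : {set 'I_6}, minor_indep E I C D (g @: X) = J X]].

End Matroids.

(* The two excluded matroids, on {a,b,c,d,e,f} = {0,1,2,3,4,5} = 'I_6 *)
Definition e6 (i : nat) : 'I_6 := inord i.
Definition tri (i j k : nat) : {set 'I_6} := [set e6 i; e6 j; e6 k].

Definition W3_indep (X : {set 'I_6}) : bool :=
  (#|X| <= 3) && [&& X != tri 0 1 2, X != tri 2 3 4 & X != tri 4 5 0].

Definition MK4_indep (X : {set 'I_6}) : bool :=
  (#|X| <= 3) && [&& X != tri 0 1 2, X != tri 2 3 4, X != tri 4 5 0 & X != tri 1 3 5].

Section Consecutive.
Variables (d : Order.disp_t) (T : finOrderType d).
Implicit Types (E V H : {set T}) (I : {set T} -> bool).

Definition consecutive H V : bool :=
  [&& V \subset H, #|V| == 3 &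
      [forall v in V, forall v' in V, forall h in H :\: V,
         ~~ ((v < h)%O && (h < v')%O)]].

(* position of the consecutive triple V in the increasing list V_H^0, V_H^1, ...:
   the number of elements of H below every element of V (i.e. below min V) *)
Definition cons_index H V : nat := #|[set h in H | [forall v in V, (h < v)%O]]|.

(* V \in V^k(H), with k = false for 0 (even indices) and k = true for 1 (odd) *)
Definition in_Vk_H (k : bool) H V : bool :=
  consecutive H V && (odd (cons_index H V) == k).

Definition in_Vk (k : bool) E I V : bool :=
  [exists H : {set T}, hyperplane E I H && in_Vk_H k H V].

End Consecutive.

(* Suppose M^k has a W^3 or M(K_4) minor.  Both have rank 3 and M^k is a loopless
   matroid of rank 3, so nothing is contracted and the minor is the restriction of
   M^k to six points g(a), ..., g(f).  The triples g{a,b,c}, g{c,d,e}, g{e,f,a} are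
   dependent, hence circuit-hyperplanes of the sparse paving matroid M^k, hence
   consecutive triples of lines H_0, H_1, H_2 of M.  These lines are distinct: if
   two coincided, the third would share two points with them, and then one of
   a, c, e, lying between the other two in the order, would break the
   consecutiveness of the triple avoiding it.  Two distinct lines of a rank-3
   paving matroid share at most one point, so H_i meets the six points exactly in
   the i-th triple; any other triple with two points on some H_i is therefore
   independent in M.  So M restricted to the six points is W^3 or M(K_4),
   according to whether g{b,d,f} is independent. *)

From mathcomp Require Import all_boot all_order.
Set Implicit Arguments. Unset Strict Implicit. Unset Printing Implicit Defensive.
Import Order.TTheory.

Section IndependenceSystem.
Variables (T : finType) (I : {set T} -> bool).
Implicit Types E X Y C : {set T}.

Lemma rk_ge_card X Y : Y \subset X -> I Y -> #|Y| <= rk I X.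
Proof. by move=> sYX iY; rewrite /rk (leq_bigmax_cond Y) // sYX. Qed.

Lemma rk_leq X m : (forall Y, Y \subset X -> I Y -> #|Y| <= m) -> rk I X <= m.
Proof. by move=> le_m; apply/bigmax_leqP => Y /andP[]; apply: le_m. Qed.

Lemma rk_le_card X : rk I X <= #|X|.
Proof. by apply: rk_leq => Y sYX _; apply: subset_leq_card. Qed.

Lemma rkS X Y : X \subset Y -> rk I X <= rk I Y.
Proof.
by move=> sXY; apply: rk_leq => Z sZX; apply: rk_ge_card (subset_trans sZX sXY).
Qed.

Lemma rk0 : rk I set0 = 0.
Proof. by apply/eqP; rewrite -leqn0 -(cards0 T) rk_le_card. Qed.

Lemma rk_lt_card_dep X Y : X \subset Y -> rk I Y < #|X| -> ~~ I X.
Proof. by move=> sXY; apply: contraTN => iX; rewrite -leqNgt rk_ge_card. Qed.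

Lemma dep_has_circuit E X : X \subset E -> ~~ I X ->
  exists2 C : {set T}, C \subset X & circuit E I C.
Proof.
move=> sXE dX; have [C /minsetP[dC minC] sCX] := minset_exists (P := fun Y => ~~ I Y) dX.
exists C => //; rewrite /circuit (subset_trans sCX sXE) dC /=.
apply/forall_inP => x xC; apply/negPn/negP => dCx.
by have := minC _ dCx (subD1set C x) => /setP/(_ x); rewrite xC !inE eqxx.
Qed.

End IndependenceSystem.

Section Matroid.
Variables (T : finType) (E : {set T}) (I : {set T} -> bool).
Hypothesis matroidM : is_matroid E I.
Implicit Types X Y F : {set T}.

Lemma rk_witness X : exists2 Y : {set T}, Y \subset X & I Y && (#|Y| == rk I X).
Proof.
have [i0 _ _ _] := matroidM.
have : 0 < #|[pred Z : {set T} | (Z \subset X) && I Z]|.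
  by apply/card_gt0P; exists set0; rewrite inE sub0set i0.
move=> /(eq_bigmax_cond (fun Y : {set T} => #|Y|)) [Y].
by rewrite inE => /andP[sYX iY] rkX; exists Y; rewrite // iY /rk rkX eqxx.
Qed.

Lemma eq_rk_card X : (rk I X == #|X|) = I X.
Proof.
apply/idP/idP => [/eqP rkX | iX]; last by rewrite eqn_leq rk_le_card rk_ge_card.
have [Y sYX /andP[iY /eqP cardY]] := rk_witness X.
suff -> : X = Y by [].
by apply/eqP; rewrite eq_sym eqEcard sYX cardY rkX leqnn.
Qed.

Lemma flat_closed F X z : flat E I F -> X \subset F -> I X -> #|X| = rk I F ->
  z \in E -> ~~ I (z |: X) -> z \in F.
Proof.
case/andP=> sFE /forall_inP rk_ext sXF iX cardX zE dzX; apply: contraNT dzX => zF.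
have [_ _ _ augment] := matroidM.
have [B sB /andP[iB /eqP cardB]] := rk_witness (z |: F).
have ltXB : #|X| < #|B| by rewrite cardB cardX rk_ext // inE zF.
have [w /setDP[wB wX] iwX] := augment _ _ iX iB ltXB.
have /setU1P[<- //|wF] := subsetP sB w wB.
have : ~~ I (w |: X).
  apply: (rk_lt_card_dep (Y := F)); first by rewrite subUset sub1set wF.
  by rewrite cardsU1 wX cardX.
by rewrite iwX.
Qed.

Lemma flat_eq F F' X : flat E I F -> flat E I F' -> X \subset F :&: F' -> I X ->
  rk I F = #|X| -> rk I F' = #|X| -> F = F'.
Proof.
move=> fF fF'; rewrite subsetI => /andP[sXF sXF'] iX rkF rkF'.
have sub G G' : flat E I G -> flat E I G' -> X \subset G -> X \subset G' ->
    rk I G = #|X| -> rk I G' = #|X| -> G' \subset G.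
  move=> fG /andP[sG'E _] sXG sXG' rkG rkG'; apply/subsetP => z zG'.
  have [zX|zX] := boolP (z \in X); first exact: subsetP sXG z zX.
  apply: flat_closed fG sXG iX (esym rkG) (subsetP sG'E z zG') _.
  apply: (rk_lt_card_dep (Y := G')); first by rewrite subUset sub1set zG' sXG'.
  by rewrite cardsU1 zX rkG'.
by apply/eqP; rewrite eqEsubset (sub F F') ?(sub F' F).
Qed.

Lemma minor_indep_deletion D X : minor_indep E I set0 D X = (X \subset E :\: D) && I X.
Proof. by rewrite /minor_indep set0U setU0 rk0 addn0 eq_rk_card. Qed.

Lemma restriction_minor_iso (J : {set 'I_6} -> bool) (g : 'I_6 -> T) :
  injective g -> (forall x, g x \in E) -> (forall X : {set 'I_6}, I (g @: X) = J X) ->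
  has_minor_iso E I J.
Proof.
move=> g_inj gE gJ.
have sgE : g @: setT \subset E by apply/subsetP => _ /imsetP[x _ ->].
have imgE : E :\: (E :\: g @: setT) = g @: setT by rewrite setDDr setDv set0U; apply/setIidPr.
exists set0, (E :\: g @: setT); split; rewrite ?sub0set ?subsetDl ?set0U //.
  by rewrite -setI_eq0 set0I.
exists g; split => // X.
by rewrite minor_indep_deletion imgE imsetS ?subsetT ?gJ.
Qed.

Lemma full_rank_minor_iso_restriction (J : {set 'I_6} -> bool) :
  (forall x, x \in E -> I [set x]) -> (exists2 X0 : {set 'I_6}, J X0 & #|X0| = rk I E) ->
  has_minor_iso E I J ->
  exists g : 'I_6 -> T,
    [/\ injective g, forall x, g x \in E & forall X : {set 'I_6}, I (g @: X) = J X].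
Proof.
move=> loopless [X0 JX0 cardX0] [C [D [sCE _ _ [g [g_inj img gJ]]]]].
have sgE (X : {set 'I_6}) : g @: X \subset E :\: (C :|: D) by rewrite -img imsetS ?subsetT.
have C0 : C = set0.
  have /andP[_ /eqP rkX0C] : minor_indep E I C D (g @: X0) by rewrite gJ.
  have : rk I (g @: X0 :|: C) <= rk I E.
    by apply: rkS; rewrite subUset sCE (subset_trans (sgE X0)) ?subsetDl.
  rewrite rkX0C card_imset // cardX0 -[X in _ <= X]addn0 leq_add2l leqn0 => /eqP rkC.
  apply/setP => x; rewrite inE; apply/negbTE/negP => xC.
  have := rk_ge_card (_ : [set x] \subset C) (loopless x (subsetP sCE x xC)).
  by rewrite sub1set rkC cards1 => /(_ xC).
exists g; split => // [x|X].
  by have := sgE [set x]; rewrite imset_set1 sub1set => /setDP[].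
by rewrite -gJ C0 minor_indep_deletion -(set0U D) -C0 sgE.
Qed.

End Matroid.

Section Paving.
Variables (T : finType) (E : {set T}) (I : {set T} -> bool).
Hypotheses (matroidM : is_matroid E I) (pavingM : paving E I).
Implicit Types X H : {set T}.

Lemma paving_indep X : X \subset E -> #|X| < rk I E -> I X.
Proof.
move=> sXE ltX; apply/negPn/negP => dX.
have [C sCX /pavingM /andP[leC _]] := dep_has_circuit sXE dX.
by move: (leq_trans leC (subset_leq_card sCX)); rewrite leqNgt ltX.
Qed.

Lemma paving_dep_circuit X : X \subset E -> #|X| = rk I E -> ~~ I X -> circuit E I X.
Proof.
move=> sXE cardX dX; have [C sCX cC] := dep_has_circuit sXE dX.
have /andP[leC _] := pavingM cC.
suff <- : C = X by [].
by apply/eqP; rewrite eqEcard sCX cardX.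
Qed.

Lemma paving_hyperplane_eq H H' X : hyperplane E I H -> hyperplane E I H' ->
  X \subset H :&: H' -> #|X|.+1 = rk I E -> H = H'.
Proof.
move=> /andP[fH /eqP rkH] /andP[fH' /eqP rkH'] sX cardX.
apply: (flat_eq matroidM fH fH' sX); rewrite ?rkH ?rkH' -?cardX //.
apply: paving_indep; last by rewrite -cardX.
by apply: subset_trans sX _; rewrite subIset // (andP fH).1.
Qed.

End Paving.

Lemma sparse_paving_circuit_hyperplane (T : finType) (E X : {set T}) I :
  is_matroid E I -> sparse_paving E I -> X \subset E -> #|X| = rk I E -> ~~ I X ->
  circuit_hyperplane E I X.
Proof.
move=> matroidM [pavingM sparseM] sXE cardX dX.
have cX := paving_dep_circuit pavingM sXE cardX dX.
rewrite /circuit_hyperplane cX sparseM // -cardX ltn_neqAle rk_le_card andbT.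
by rewrite (eq_rk_card matroidM).
Qed.

Lemma cards3 (T : finType) (x y z : T) :
  x != y -> y != z -> x != z -> #|[set x; y; z]| = 3.
Proof. by move=> xy yz xz; rewrite -setUA cardsU1 cards2 !inE negb_or xy xz yz. Qed.

Section W3Lines.
Implicit Types (i j k : 'I_3) (x : 'I_6) (X : {set 'I_6}).

Lemma ord_all n (P : pred nat) : all P (iota 0 n) -> forall x : 'I_n, P x.
Proof. by move=> /allP allP x; apply: allP; rewrite mem_iota ltn_ord. Qed.

Lemma ord_has n (P : pred nat) : has P (iota 0 n) -> exists x : 'I_n, P x.
Proof. by case/hasP => x; rewrite mem_iota => /andP[_ ltx] Px; exists (Ordinal ltx). Qed.

Lemma mem_tri x a b c : a < 6 -> b < 6 -> c < 6 ->
  (x \in tri a b c) = (x == a :> nat) || (x == b :> nat) || (x == c :> nat).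
Proof. by move=> a6 b6 c6; rewrite !inE -!val_eqE /= !inordK. Qed.

Lemma card_tri a b c : a < 6 -> b < 6 -> c < 6 -> a != b -> b != c -> a != c ->
  #|tri a b c| = 3.
Proof. by move=> a6 b6 c6 ab bc ac; rewrite cards3 // -val_eqE /= !inordK. Qed.

Lemma mem_tri135 x : (x \in tri 1 3 5) = odd x.
Proof. by rewrite mem_tri //; case: x => [[|[|[|[|[|[|//]]]]]] ?]. Qed.

Lemma mem_tri024 x : (x \in tri 0 2 4) = ~~ odd x.
Proof. by rewrite mem_tri //; case: x => [[|[|[|[|[|[|//]]]]]] ?]. Qed.

(* [W3_line i] is the arc {2i, 2i+1, 2i+2} of the hexagon 0..5.  Facts about these
   six points are decided by evaluating [all]/[has] over [iota] with the test
   [on_W3_line] on [nat], because the finset operations do not compute. *)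
Definition W3_line (i : 'I_3) : {set 'I_6} := nth set0 [:: tri 0 1 2; tri 2 3 4; tri 4 5 0] i.

Definition on_W3_line (i x : nat) : bool := (x + 6 - i.*2) %% 6 <= 2.

Lemma mem_W3_line i x : (x \in W3_line i) = on_W3_line i x.
Proof.
by case: i => [[|[|[|//]]] ?]; rewrite /= mem_tri //; case: x => [[|[|[|[|[|[|//]]]]]] ?].
Qed.

Lemma card_W3_line i : #|W3_line i| = 3.
Proof. by case: i => [[|[|[|//]]] ?]; rewrite /= card_tri. Qed.

Lemma W3_indepE X : W3_indep X = (#|X| <= 3) && [forall i, X != W3_line i].
Proof.
rewrite /W3_indep; congr andb; apply/and3P/forallP => [[n0 n1 n2] [[|[|[|//]]] ?] //|neX].
by split; [exact: neX ord0 | move: (neX (inord 1)) | move: (neX (inord 2))];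
  rewrite /W3_line inordK.
Qed.

Lemma MK4_indepE X : MK4_indep X = W3_indep X && (X != tri 1 3 5).
Proof. by rewrite /MK4_indep /W3_indep -!andbA. Qed.

Lemma W3_dep_line i : W3_indep (W3_line i) = false.
Proof.
by rewrite W3_indepE; apply/negbTE/nandP; right; apply/forallPn; exists i; rewrite negbK.
Qed.

Lemma MK4_dep_line i : MK4_indep (W3_line i) = false.
Proof. by rewrite MK4_indepE W3_dep_line. Qed.

Lemma W3_lines_cover x : exists i, x \in W3_line i.
Proof.
have /ord_has[i] := @ord_all 6 (fun y => has (on_W3_line^~ y) (iota 0 3)) isT x.
by exists i; rewrite mem_W3_line.
Qed.

Lemma W3_lines_meet i j : exists s, (s \in W3_line i) && (s \in W3_line j).
Proof.
pose P (a b c : nat) := on_W3_line a c && on_W3_line b c.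
have /ord_has[s] := ord_all (@ord_all 3 (fun a => all (fun b =>
  has (P a b) (iota 0 6)) (iota 0 3)) isT i) j.
by exists s; rewrite !mem_W3_line.
Qed.

Lemma W3_third_line i j k : i != j ->
  exists p q, [/\ p != q, p \in W3_line k :&: (W3_line i :|: W3_line j)
                        & q \in W3_line k :&: (W3_line i :|: W3_line j)].
Proof.
move=> ij; pose P (a b c y : nat) := on_W3_line c y && (on_W3_line a y || on_W3_line b y).
have := ord_all (ord_all (@ord_all 3 (fun a => all (fun b => all (fun c =>
    (a != b) ==> has (fun y => has (fun z => [&& y != z, P a b c y & P a b c z])
      (iota 0 6)) (iota 0 6)) (iota 0 3)) (iota 0 3)) isT i) j) k.
rewrite val_eqE ij => /ord_has[p /ord_has[q /and3P[pq Pp Pq]]].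
by exists p, q; split; rewrite // !inE !mem_W3_line.
Qed.

Lemma W3_two_on_line X : #|X| = 3 -> X != tri 1 3 5 -> exists i, 1 < #|X :&: W3_line i|.
Proof.
move=> cardX n135.
have /card_gt2P[p [q [r [[pX qX rX] [pq qr rp]]]]] : 2 < #|X| by rewrite cardX.
have eX : X = [set p; q; r].
  by apply/eqP; rewrite eq_sym eqEcard !subUset !sub1set pX qX rX cardX cards3 // eq_sym.
have not_odd : ~~ [&& odd p, odd q & odd r].
  apply: contra n135 => /and3P[op oq or].
  by rewrite eX eqEcard !subUset !sub1set !mem_tri135 op oq or card_tri // cards3 // eq_sym.
pose P (l a b c : nat) := [|| on_W3_line l a && on_W3_line l b,
  on_W3_line l a && on_W3_line l c | on_W3_line l b && on_W3_line l c].
have := ord_all (ord_all (@ord_all 6 (fun a => all (fun b => all (fun c =>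
    [&& a != b, b != c & c != a] ==> ~~ [&& odd a, odd b & odd c] ==>
    has (fun l => P l a b c) (iota 0 3)) (iota 0 6)) (iota 0 6)) isT p) q) r.
rewrite !val_eqE pq qr rp not_odd => /ord_has[i Pi]; exists i; apply/card_gt1P.
case/or3P: Pi => /andP[hx hy]; [exists p, q | exists p, r | exists q, r];
  by rewrite eX !inE !mem_W3_line hx hy !eqxx ?orbT ?orTb // eq_sym.
Qed.

Lemma W3_line_odd i : exists2 x, x \in W3_line i & odd x.
Proof.
have /ord_has[x] :=
  @ord_all 3 (fun l => has (fun y => on_W3_line l y && odd y) (iota 0 6)) isT i.
by rewrite -mem_W3_line => /andP[]; exists x.
Qed.

Lemma W3_indep_even : W3_indep (tri 0 2 4).
Proof.
rewrite W3_indepE card_tri //; apply/forallP => i; apply/eqP => e.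
by have [x] := W3_line_odd i; rewrite -e mem_tri024 => /negbTE ->.
Qed.

Lemma MK4_indep_even : MK4_indep (tri 0 2 4).
Proof.
rewrite MK4_indepE W3_indep_even; apply/eqP => /setP/(_ ord0).
by rewrite mem_tri024 mem_tri135.
Qed.

End W3Lines.

Section Consecutive.
Variables (d : Order.disp_t) (T : finOrderType d).
Implicit Types (x y z : T) (S V : {set T}).

Definition between x y z : bool := ((x < y) && (y < z))%O || ((z < y) && (y < x))%O.

Lemma between3 x y z : x != y -> y != z -> x != z ->
  [\/ between y x z, between x y z | between x z y].
Proof.
rewrite /between; case: (ltgtP x y) => // _ _; case: (ltgtP y z) => // _ _;
  case: (ltgtP x z) => // _ _; by [constructor 1 | constructor 2 | constructor 3].
Qed.

Lemma consecutive_sub S V : consecutive S V -> V \subset S.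
Proof. by case/and3P. Qed.

Lemma consecutive_between S V x y z :
  consecutive S V -> x \in V -> z \in V -> y \in S -> between x y z -> y \in V.
Proof.
case/and3P=> _ _ /forall_inP consV xV zV yS; apply: contraTT => yV.
have outside v v' : v \in V -> v' \in V -> ~~ ((v < y) && (y < v'))%O.
  move=> vV v'V; move/forall_inP: (consV v vV) => /(_ v' v'V)/forall_inP; apply.
  by rewrite inE yV.
by rewrite /between negb_or !outside.
Qed.

Lemma W3_lines_not_consecutive S (g : 'I_6 -> T) :
  injective g -> ~ (forall i, consecutive S (g @: W3_line i)).
Proof.
move=> g_inj consS.
have gS (x : 'I_6) : g x \in S.
  have [i xL] := W3_lines_cover x.
  exact: subsetP (consecutive_sub (consS i)) _ (imset_f g xL).
have apart i (x y z : 'I_6) : x \in W3_line i -> z \in W3_line i -> y \notin W3_line i ->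
    ~~ between (g x) (g y) (g z).
  move=> xL zL; apply: contra => gxyz; rewrite -(mem_imset _ _ g_inj).
  exact: consecutive_between (consS i) (imset_f g xL) (imset_f g zL) (gS y) gxyz.
pose p0 := @Ordinal 6 0 isT; pose p2 := @Ordinal 6 2 isT; pose p4 := @Ordinal 6 4 isT.
have := @between3 (g p0) (g p2) (g p4); rewrite !(inj_eq g_inj) => /(_ isT isT isT) [];
  apply/negP.
- by apply: (apart (@Ordinal 3 1 isT)); rewrite mem_W3_line.
- by apply: (apart (@Ordinal 3 2 isT)); rewrite mem_W3_line.
- by apply: (apart (@Ordinal 3 0 isT)); rewrite mem_W3_line.
Qed.

End Consecutive.

Section W3Restriction.
Variables (T : finType) (E : {set T}) (I : {set T} -> bool).
Hypotheses (matroidM : is_matroid E I) (pavingM : paving E I) (rankM : rk I E = 3).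
Variables (g : 'I_6 -> T) (H : 'I_3 -> {set T}).
Hypotheses (g_inj : injective g) (gE : forall x, g x \in E).
Hypotheses (hypH : forall i, hyperplane E I (H i))
           (lineH : forall i, g @: W3_line i \subset H i).
Implicit Types (i j k : 'I_3) (x y : 'I_6) (X : {set 'I_6}).

Let gH i x : x \in W3_line i -> g x \in H i.
Proof. by move=> xL; apply: subsetP (lineH i) _ (imset_f g xL). Qed.

Let rkH i : rk I (H i) = 2.
Proof. by have /andP[_ /eqP ->] := hypH i; rewrite rankM. Qed.

Let sgE X : g @: X \subset E.
Proof. by apply/subsetP => _ /imsetP[x _ ->]. Qed.

Lemma W3_hyperplane_eq i j x y :
  x != y -> g x \in H i :&: H j -> g y \in H i :&: H j -> H i = H j.
Proof.
move=> xy gx gy; apply: (paving_hyperplane_eq matroidM pavingM (hypH i) (hypH j)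
  (X := [set g x; g y])); first by rewrite subUset !sub1set gx gy.
by rewrite cards2 (inj_eq g_inj) xy rankM.
Qed.

Lemma W3_hyperplanes_collapse i j : i != j -> H i = H j -> forall k, H k = H i.
Proof.
move=> ij Hij k; have [p [q [pq /setIP[pk pij] /setIP[qk qij]]]] := W3_third_line k ij.
have inHi x : x \in W3_line i :|: W3_line j -> g x \in H i.
  by case/setUP => xL; [|rewrite Hij]; apply: gH.
by apply: (W3_hyperplane_eq pq); rewrite inE gH ?inHi.
Qed.

Hypothesis H_inj : injective H.

Lemma mem_W3_hyperplane i x : (g x \in H i) = (x \in W3_line i).
Proof.
apply/idP/idP => [gxH|]; last exact: gH.
apply/negPn/negP => xLi; have [j xLj] := W3_lines_cover x.
have [s /andP[sLi sLj]] := W3_lines_meet i j.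
have ij : i != j by apply: contraNneq xLi => ->.
have sx : s != x by apply: contraNneq xLi => <-.
by move/eqP: ij; apply; apply: H_inj; apply: (W3_hyperplane_eq sx); rewrite inE ?gxH !gH.
Qed.

Lemma W3_indep_two_on_line X i :
  #|X| = 3 -> X != W3_line i -> 1 < #|X :&: W3_line i| -> I (g @: X).
Proof.
move=> cardX XL two; set Y := X :&: W3_line i.
have [r /setDP[rX rL]] : exists r, r \in X :\: W3_line i.
  apply/set0Pn; rewrite setD_eq0; apply: contra XL => sXL.
  by rewrite eqEcard sXL cardX card_W3_line.
have rY : r \notin Y by rewrite inE (negbTE rL) andbF.
have cardY : #|Y| = 2.
  have : #|Y| < #|X| by apply/proper_card/properP; split; [exact: subsetIl | exists r].
  by rewrite cardX ltnS => le2; apply/eqP; rewrite eqn_leq le2 two.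
have <- : r |: Y = X.
  by apply/eqP; rewrite eqEcard subUset sub1set rX subsetIl cardX cardsU1 rY cardY.
rewrite imsetU1; apply/negPn/negP => dep.
have sYH : g @: Y \subset H i by apply: subset_trans (lineH i); apply/imsetS/subsetIr.
have iY : I (g @: Y).
  by apply: (paving_indep pavingM (sgE Y)); rewrite card_imset // cardY rankM.
have cardgY : #|g @: Y| = rk I (H i) by rewrite card_imset // cardY rkH.
have := flat_closed matroidM (andP (hypH i)).1 sYH iY cardgY (gE r) dep.
by rewrite mem_W3_hyperplane (negbTE rL).
Qed.

Lemma W3_restriction_indep X :
  I (g @: X) = W3_indep X && ((X != tri 1 3 5) || I (g @: tri 1 3 5)).
Proof.
rewrite W3_indepE; case: (ltngtP #|X| 3) => cardX /=.
- rewrite (paving_indep pavingM (sgE X)) ?card_imset ?rankM //.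
  have -> : X != tri 1 3 5 by apply: contraTneq cardX => ->; rewrite card_tri.
  rewrite andbT; apply/esym/forallP => i.
  by apply: contraTneq cardX => ->; rewrite card_W3_line.
- by apply/negbTE/(rk_lt_card_dep (sgE X)); rewrite card_imset // rankM.
case: (boolP [forall i, X != W3_line i]) => [notline|] /=.
  case: (eqVneq X (tri 1 3 5)) => [-> //|n135] /=.
  have [i two] := W3_two_on_line cardX n135.
  exact: W3_indep_two_on_line cardX (forallP notline i) two.
case/forallPn => i /negPn/eqP -> /=; apply/negbTE/(rk_lt_card_dep (lineH i)).
by rewrite card_imset // card_W3_line rkH.
Qed.

Lemma W3_or_MK4_restriction : has_minor_iso E I W3_indep \/ has_minor_iso E I MK4_indep.
Proof.
have [ind135|dep135] := boolP (I (g @: tri 1 3 5)); [left|right];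
  apply: (restriction_minor_iso matroidM g_inj gE) => X; rewrite W3_restriction_indep.
  by rewrite ind135 orbT andbT.
by rewrite MK4_indepE (negbTE dep135) orbF.
Qed.

End W3Restriction.

Lemma Vk_minor_W3_or_MK4 d (T : finOrderType d) (E : {set T}) (I Ik : {set T} -> bool)
    (k : bool) (J : {set 'I_6} -> bool) :
  is_matroid E I -> paving E I -> rk I E = 3 ->
  is_matroid E Ik -> sparse_paving E Ik -> rk Ik E = 3 ->
  (forall V, circuit_hyperplane E Ik V = in_Vk k E I V) ->
  J (tri 0 2 4) -> (forall i, J (W3_line i) = false) ->
  has_minor_iso E Ik J -> has_minor_iso E I W3_indep \/ has_minor_iso E I MK4_indep.
Proof.
move=> matroidM pavingM rankM matroidK sparseK rankK VkE J024 Jline minorK.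
have loopless x : x \in E -> Ik [set x].
  by move=> xE; apply: (paving_indep sparseK.1); rewrite ?sub1set ?cards1 ?rankK.
have full024 : exists2 X0, J X0 & #|X0| = rk Ik E by exists (tri 0 2 4); rewrite ?card_tri.
have [g [g_inj gE gJ]] := full_rank_minor_iso_restriction matroidK loopless full024 minorK.
have /fin_all_exists[H HP] i : exists H, hyperplane E I H && consecutive H (g @: W3_line i).
  have : circuit_hyperplane E Ik (g @: W3_line i).
    apply: sparse_paving_circuit_hyperplane matroidK sparseK _ _ _.
    - by apply/subsetP => _ /imsetP[x _ ->].
    - by rewrite card_imset // card_W3_line rankK.
    by rewrite gJ Jline.
  by rewrite VkE => /existsP[H /andP[hypH /andP[consH _]]]; exists H; rewrite hypH.
have hypH i : hyperplane E I (H i) by case/andP: (HP i).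
have consH i : consecutive (H i) (g @: W3_line i) by case/andP: (HP i).
have H_inj : injective H.
  move=> i j Hij; apply/eqP/negPn/negP => ij.
  apply: (W3_lines_not_consecutive (S := H i) g_inj) => i'.
  rewrite -(W3_hyperplanes_collapse matroidM pavingM rankM g_inj hypH
    (fun i => consecutive_sub (consH i)) ij Hij i').
  exact: consH.
exact: (W3_or_MK4_restriction matroidM pavingM rankM g_inj gE hypH
  (fun i => consecutive_sub (consH i)) H_inj).
Qed.

Theorem lemma11 (d : Order.disp_t) (T : finOrderType d) (E : {set T})
    (I I0 I1 : {set T} -> bool) :
  is_matroid E I -> rk I E = 3 -> paving E I ->
  is_matroid E I0 -> rk I0 E = 3 -> sparse_paving E I0 ->
  (forall V, circuit_hyperplane E I0 V = in_Vk false E I V) ->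
  is_matroid E I1 -> rk I1 E = 3 -> sparse_paving E I1 ->
  (forall V, circuit_hyperplane E I1 V = in_Vk true E I V) ->
  ~ has_minor_iso E I W3_indep -> ~ has_minor_iso E I MK4_indep ->
  (~ has_minor_iso E I0 W3_indep /\ ~ has_minor_iso E I0 MK4_indep) /\
  (~ has_minor_iso E I1 W3_indep /\ ~ has_minor_iso E I1 MK4_indep).
Proof.
move=> matroidM rankM pavingM matroid0 rank0 sparse0 V0E matroid1 rank1 sparse1 V1E noW noK.
have excluded Ik k : is_matroid E Ik -> rk Ik E = 3 -> sparse_paving E Ik ->
    (forall V, circuit_hyperplane E Ik V = in_Vk k E I V) ->
    ~ has_minor_iso E Ik W3_indep /\ ~ has_minor_iso E Ik MK4_indep.
  move=> matroidK rankK sparseK VkE; have lift := Vk_minor_W3_or_MK4 matroidM pavingM rankM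
    matroidK sparseK rankK VkE.
  split=> minorK.
    by case: (lift _ W3_indep_even W3_dep_line minorK) => [/noW|/noK].
  by case: (lift _ MK4_indep_even MK4_dep_line minorK) => [/noW|/noK].
by split; apply: excluded.
Qed.
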